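(* Assume $\alpha\ge(N-1)/(N-2)$, let $1\le k\le N/2$ and let $v\in E_k$. If $k>1$ or if $t(v)<1$, then $v$ is linearly unstable.
   Context: Let $N\ge3$, $\alpha>1$, and $A_{i,j}=1-\delta_{i,j}$ for $i,j\le N$. Let $\Delta=\{v\in\mathbb R_+^N:\sum_iv_i=1,\ v_i\le3/4\ \forall i\}$. For $v$ with nonnegative coordinates let $v^\alpha=(v_i^\alpha)_i$, $H(v)=\sum_{i\neq j}v_i^\alpha v_j^\alpha$, $\pi_i(v)=v_i^\alpha(Av^\alpha)_i/H(v)$, and on $\Delta$ let $F(v)=-v+\pi(v)$. An equilibrium is $v\in\Delta$ with $F(v)=0$. For $1\le k\le N/2$, $E_k$ denotes the set of equilibria $v$ with all coordinates positive, different from the center $(1/N,\dots,1/N)$, and such that $v_1=\dots=v_k$ and $v_{k+1}=\dots=v_N$. For $v\in E_k$, $t(v)=v_N/v_1$. With $DF(v)$ the differential at $v$ of $v\mapsto-v+\pi(v)$ acting on $\{x:\sum_ix_i=0\}$, an equilibrium is linearly unstable if some eigenvalue of $DF(v)$ has positive real part. *)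

From HB Require Import structures.
From mathcomp Require Import all_boot all_order all_algebra.
From mathcomp Require Import all_classical all_reals all_analysis.
From mathcomp Require Import complex.
Set Implicit Arguments. Unset Strict Implicit. Unset Printing Implicit Defensive.
Import Order.TTheory GRing.Theory Num.Theory.
Local Open Scope ring_scope.

Section Defs.
Variables (R : realType) (N : nat) (alpha : R).

Definition vpow (v : 'I_N -> R) (i : 'I_N) : R := v i `^ alpha.

Definition Amat : 'M[R]_N := \matrix_(i, j) (1 - (i == j)%:R).

Definition Avpow (v : 'I_N -> R) (i : 'I_N) : R :=
  \sum_(j < N) Amat i j * vpow v j.

Definition Hfun (v : 'I_N -> R) : R :=
  \sum_(i < N) \sum_(j < N | i != j) vpow v i * vpow v j.

Definition pif (v : 'I_N -> R) (i : 'I_N) : R :=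
  vpow v i * Avpow v i / Hfun v.

Definition Ffun (v : 'I_N -> R) (i : 'I_N) : R := - v i + pif v i.

Definition inDelta (v : 'I_N -> R) : Prop :=
  (forall i, 0 <= v i) /\ \sum_(i < N) v i = 1 /\ (forall i, v i <= 3 / 4).

Definition equilibrium (v : 'I_N -> R) : Prop :=
  inDelta v /\ forall i, Ffun v i = 0.

Definition center : 'I_N -> R := fun _ => 1 / N%:R.

(* E_k (indices are 0-based: v_1..v_k are v 0 .. v (k-1)) *)
Definition inEk (k : nat) (v : 'I_N -> R) : Prop :=
  [/\ equilibrium v,
      (forall i, 0 < v i),
      v <> center,
      (forall i j : 'I_N, (i < k)%N -> (j < k)%N -> v i = v j) &
      (forall i j : 'I_N, (k <= i)%N -> (k <= j)%N -> v i = v j)].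

Definition tratio (v : 'I_N -> R) : R :=
  match N as n return ('I_n -> R) -> R with
  | 0 => fun _ => 0
  | n.+1 => fun w => w ord_max / w ord0
  end v.

Definition jacF (v : 'I_N -> R) : 'M[R]_N :=
  \matrix_(i, j)
    derive1 (fun s : R => Ffun (fun l => v l + (if l == j then s else 0)) i) 0.

(* linear instability: DF(v), acting on {x : sum x = 0}, has an eigenvalue
   with positive real part (complex eigenvalue / complex eigenvector in the
   complexified hyperplane). *)
Definition lin_unstable (v : 'I_N -> R) : Prop :=
  exists (lam : complex.complex R) (z : 'cV[complex.complex R]_N),
    [/\ z != 0,
        \sum_(i < N) z i ord0 = 0,
        map_mx (fun r : R => complex.Complex r 0) (jacF v) *m z = lam *: z &
        0 < complex.Re lam].

End Defs.

(* Moving one coordinate v_j only changes w_j = v_j^alpha, so in the j-th variable each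
   F_i is an affine function plus a Moebius transformation of (v_j + s)^alpha; this gives
   the Jacobian in closed form.  If v_p = v_q, its entries are invariant under swapping p
   and q, so e_p - e_q (a tangent vector of the simplex) is an eigenvector; writing
   w = v_p^alpha and S = sum_l v_l^alpha, the equilibrium equation v_p H = w (S - w)
   eliminates H and the eigenvalue is (alpha (S - 2 w) - (S - w)) / (S - w).  When v_p is
   the smallest coordinate but not the largest, S > N w, and alpha >= (N-1)/(N-2), i.e.
   (alpha - 1) N >= 2 alpha - 1, makes this eigenvalue positive.  A point of E_k takes two
   values, and the smaller one is taken at least twice when k > 1 or t(v) < 1. *)

From Pilot Require Import Defs.
From HB Require Import structures.
From mathcomp Require Import all_boot all_order all_algebra.
From mathcomp Require Import all_classical all_reals all_analysis.
From mathcomp Require Import complex.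
From mathcomp Require Import ring lra zify.
Set Implicit Arguments.
Unset Strict Implicit.
Unset Printing Implicit Defensive.
Import Order.TTheory GRing.Theory Num.Theory.
Local Open Scope ring_scope.

Section Derivatives.
Variable R : realType.

Lemma is_derive_powR_shift (alpha x : R) : 0 < x ->
  is_derive (0 : R) (1 : R) (fun s => (x + s) `^ alpha) (alpha * x `^ (alpha - 1)).
Proof.
move=> x_gt0.
have -> : (fun s => (x + s) `^ alpha) = (fun s => s `^ alpha) \o shift x.
  by apply/funext => s /=; rewrite addrC.
have := is_derive1_comp (@is_derive1_powR R alpha (shift x 0) _) (is_derive_shift 0 1 x).
by rewrite /= add0r mulr1; apply.
Qed.

Lemma is_derive_mobius (y : R -> R) (x dy a b c d : R) :
  c + d * y x != 0 -> is_derive x (1 : R) y dy ->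
  is_derive x (1 : R) (fun s => (a + b * y s) / (c + d * y s))
    ((b * c - a * d) * dy / (c + d * y x) ^+ 2).
Proof.
move=> den_neq0 dery.
have affine e f : is_derive x (1 : R) (fun s => e + f * y s) (f * dy).
  by rewrite -[f * dy]add0r; exact: is_deriveD (is_derive_cst e x 1) (is_deriveZ f dery).
have inv := @is_deriveV R (fun s => c + d * y s) x _ _ den_neq0 (affine c d).
have := is_deriveM (affine a b) inv.
rewrite /GRing.scale /=.
suff -> : (b * c - a * d) * dy / (c + d * y x) ^+ 2 =
  (a + b * y x) * (- (c + d * y x) ^- 2 * (d * dy)) + (c + d * y x)^-1 * (b * dy) by [].
by field.
Qed.

Lemma derive1_affine_add_mobius_powR (alpha x c0 c1 a b c d : R) :
  0 < x -> c + d * x `^ alpha != 0 ->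
  derive1 (fun s => - (c0 + c1 * s) +
                    (a + b * (x + s) `^ alpha) / (c + d * (x + s) `^ alpha)) 0 =
  - c1 + (b * c - a * d) * (alpha * x `^ (alpha - 1)) / (c + d * x `^ alpha) ^+ 2.
Proof.
move=> x_gt0 den_neq0.
have dery := @is_derive_powR_shift alpha x x_gt0.
have affine : is_derive (0 : R) (1 : R) (fun s => - (c0 + c1 * s)) (- c1).
  have := is_deriveN (is_deriveD (is_derive_cst c0 (0 : R) 1)
                                 (is_deriveZ c1 (is_derive_id (0 : R) 1))).
  by rewrite add0r /GRing.scale /= mulr1.
have := @is_derive_mobius (fun s => (x + s) `^ alpha) 0 _ a b c d _ dery.
rewrite /= addr0 => /(_ den_neq0) mobius.
by rewrite derive1E (@derive_val _ _ _ _ _ _ _ (is_deriveD affine mobius)).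
Qed.

End Derivatives.

Section Sums.
Variables (R : comPzRingType) (N : nat).

Lemma sum_update (x : 'I_N -> R) j y :
  \sum_l (if l == j then y else x l) = \sum_l x l - x j + y.
Proof.
rewrite (bigD1 j) //= eqxx [in RHS](bigD1 j) //=.
rewrite (eq_bigr x) => [|l /negbTE -> //].
by ring.
Qed.

Lemma sum_mul_sum_sub (x : 'I_N -> R) :
  \sum_i x i * (\sum_l x l - x i) = (\sum_l x l) ^+ 2 - \sum_l x l ^+ 2.
Proof.
rewrite [X in X - _]expr2 mulr_suml -sumrB.
by apply: eq_bigr => i _; rewrite mulrBr expr2.
Qed.

Lemma sum_mul_sum_sub_update (x : 'I_N -> R) j y :
  let x' l := if l == j then y else x l in
  \sum_i x' i * (\sum_l x' l - x' i) =
  \sum_i x i * (\sum_l x l - x i) + 2 * (y - x j) * (\sum_l x l - x j).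
Proof.
move=> x'; rewrite !sum_mul_sum_sub sum_update.
have -> : \sum_l x' l ^+ 2 = \sum_l x l ^+ 2 - x j ^+ 2 + y ^+ 2.
  by rewrite -(sum_update (fun l => x l ^+ 2)); apply: eq_bigr => l _; rewrite /x'; case: eqP.
ring.
Qed.

End Sums.

Section Jacobian.
Variables (R : realType) (N : nat) (alpha : R).

Lemma Avpow_sum (u : 'I_N -> R) i :
  Avpow alpha u i = \sum_l vpow alpha u l - vpow alpha u i.
Proof.
rewrite /Avpow (bigD1 i) //= [in RHS](bigD1 i) //= !mxE eqxx subrr mul0r add0r addrC addrK.
by apply: eq_bigr => l /negbTE; rewrite !mxE eq_sym => ->; rewrite subr0 mul1r.
Qed.

Lemma Hfun_sum (u : 'I_N -> R) :
  Hfun alpha u = \sum_i vpow alpha u i * (\sum_l vpow alpha u l - vpow alpha u i).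
Proof.
apply: eq_bigr => i _; rewrite -mulr_sumr [in RHS](bigD1 i) //= addrC addrK.
by congr (_ * _); apply: eq_bigl => l; rewrite eq_sym.
Qed.

Variable v : 'I_N -> R.
Local Notation w := (vpow alpha v).
Local Notation S := (\sum_l vpow alpha v l).
Local Notation H := (Hfun alpha v).
Local Notation perturbed j s := (fun l => v l + (if l == j then s else 0)).

Lemma vpow_perturbed j s :
  vpow alpha (perturbed j s) = fun l => if l == j then (v j + s) `^ alpha else w l.
Proof. by apply: funext => l; rewrite /vpow; case: eqP => [->|_]; rewrite ?addr0. Qed.

Lemma Hfun_perturbed j s :
  Hfun alpha (perturbed j s) =
  H - 2 * w j * (S - w j) + 2 * (S - w j) * (v j + s) `^ alpha.
Proof. rewrite !Hfun_sum vpow_perturbed sum_mul_sum_sub_update; ring. Qed.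

Lemma Ffun_perturbed_diag j s :
  Ffun alpha (perturbed j s) j =
  - (v j + s) + (S - w j) * (v j + s) `^ alpha /
                (H - 2 * w j * (S - w j) + 2 * (S - w j) * (v j + s) `^ alpha).
Proof.
rewrite /Ffun /pif Avpow_sum -Hfun_perturbed vpow_perturbed sum_update eqxx.
by rewrite addrK [_ `^ _ * _]mulrC.
Qed.

Lemma Ffun_perturbed_offdiag i j s : i != j ->
  Ffun alpha (perturbed j s) i =
  - v i + w i * (S - w i - w j + (v j + s) `^ alpha) /
          (H - 2 * w j * (S - w j) + 2 * (S - w j) * (v j + s) `^ alpha).
Proof.
move=> /negbTE neq_ij.
rewrite /Ffun /pif Avpow_sum -Hfun_perturbed vpow_perturbed sum_update neq_ij addr0.
by rewrite addrAC (addrAC (\sum_l _)).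
Qed.

Lemma jacF_diag j : 0 < v j -> H != 0 ->
  jacF alpha v j j =
  - 1 + alpha * v j `^ (alpha - 1) * (S - w j) * (H - 2 * w j * (S - w j)) / H ^+ 2.
Proof.
move=> vj_gt0 H_neq0.
have den : H - 2 * w j * (S - w j) + 2 * (S - w j) * v j `^ alpha = H.
  by rewrite /vpow; ring.
rewrite /jacF mxE.
have -> : (fun s => Ffun alpha (perturbed j s) j) = fun s =>
    - (v j + 1 * s) + (0 + (S - w j) * (v j + s) `^ alpha) /
                      (H - 2 * w j * (S - w j) + 2 * (S - w j) * (v j + s) `^ alpha).
  by apply: funext => s; rewrite Ffun_perturbed_diag mul1r add0r.
by rewrite derive1_affine_add_mobius_powR ?den //; field.
Qed.

Lemma jacF_offdiag i j : i != j -> 0 < v j -> H != 0 ->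
  jacF alpha v i j =
  alpha * v j `^ (alpha - 1) * w i * (H - 2 * (S - w i) * (S - w j)) / H ^+ 2.
Proof.
move=> neq_ij vj_gt0 H_neq0.
have den : H - 2 * w j * (S - w j) + 2 * (S - w j) * v j `^ alpha = H.
  by rewrite /vpow; ring.
rewrite /jacF mxE.
have -> : (fun s => Ffun alpha (perturbed j s) i) = fun s =>
    - (v i + 0 * s) + (w i * (S - w i - w j) + w i * (v j + s) `^ alpha) /
                      (H - 2 * w j * (S - w j) + 2 * (S - w j) * (v j + s) `^ alpha).
  by apply: funext => s; rewrite Ffun_perturbed_offdiag // mul0r addr0 mulrDr.
by rewrite derive1_affine_add_mobius_powR ?den //; field.
Qed.

End Jacobian.

Lemma mulmx_delta_sub (R : pzRingType) n (M : 'M[R]_n) (p q : 'I_n) :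
  p != q -> M p p = M q q -> M p q = M q p ->
  (forall i, i != p -> i != q -> M i p = M i q) ->
  let e := delta_mx p 0 - delta_mx q 0 : 'cV_n in M *m e = (M p p - M p q) *: e.
Proof.
move=> neq_pq Mpp Mpq Mi e; rewrite mulmxBr -!colE.
apply/matrixP => i j; rewrite (ord1 j) !mxE !eqxx !andbT.
have [->|neq_ip] := eqVneq i p; first by rewrite (negbTE neq_pq) subr0 mulr1.
have [->|neq_iq] := eqVneq i q; first by rewrite Mpp -Mpq sub0r mulrN1 opprB.
by rewrite (Mi i) // !subrr mulr0.
Qed.

Lemma lin_unstable_of_real_eigen (R : realType) N (alpha : R) (v : 'I_N -> R)
    (z : 'cV[R]_N) (lam : R) :
  z != 0 -> \sum_i z i 0 = 0 -> jacF alpha v *m z = lam *: z -> 0 < lam ->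
  lin_unstable alpha v.
Proof.
move=> z_neq0 z_sum0 z_eigen lam_gt0.
exists (lam%:C)%C, (map_mx (real_complex R) z); split => //.
- by rewrite map_mx_eq0.
- rewrite (eq_bigr (fun i => (z i 0)%:C%C)) => [|i _]; last by rewrite mxE.
  by rewrite -rmorph_sum z_sum0.
- change (map_mx (real_complex R) (jacF alpha v) *m map_mx (real_complex R) z =
          (lam%:C)%C *: map_mx (real_complex R) z).
  by rewrite -map_mxM z_eigen map_mxZ.
Qed.

Lemma sum_delta_sub_col (R : pzRingType) n (p q : 'I_n) :
  \sum_i (delta_mx p 0 - delta_mx q 0 : 'cV[R]_n) i 0 = 0.
Proof.
have sum1 a : \sum_i (delta_mx a 0 : 'cV[R]_n) i 0 = 1.
  by rewrite (bigD1 a) //= mxE !eqxx big1 ?addr0 // => i /negbTE neq_ia; rewrite mxE neq_ia.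
rewrite (eq_bigr (fun i => (delta_mx p 0 : 'cV[R]_n) i 0 - (delta_mx q 0 : 'cV_n) i 0)).
  by rewrite sumrB !sum1 subrr.
by move=> i _; rewrite !mxE.
Qed.

Lemma card_mul_lt_sum (R : numDomainType) N (x : 'I_N -> R) (m : 'I_N) (a : R) :
  (forall l, a <= x l) -> a < x m -> N%:R * a < \sum_l x l.
Proof.
move=> le_ax lt_axm.
rewrite -[N in N%:R]card_ord mulr_natl -sumr_const (bigD1 m) //= [X in _ < X](bigD1 m) //=.
by rewrite ltr_leD // ler_sum.
Qed.

Section Instability.
Variables (R : realType) (N : nat) (alpha : R) (v : 'I_N -> R).
Local Notation w := (vpow alpha v).
Local Notation S := (\sum_l vpow alpha v l).
Local Notation H := (Hfun alpha v).

Lemma Hfun_neq0_of_Ffun_eq0 p : 0 < v p -> Ffun alpha v p = 0 -> H != 0.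
Proof.
move=> vp_gt0; apply: contra_eq_neq => H0.
by rewrite /Ffun /pif H0 invr0 mulr0 addr0 oppr_eq0 gt_eqF.
Qed.

Lemma Ffun_eq0_balance p : H != 0 -> Ffun alpha v p = 0 -> v p * H = w p * (S - w p).
Proof.
move=> H_neq0; rewrite /Ffun /pif Avpow_sum addrC => /eqP; rewrite subr_eq0 => /eqP <-.
by rewrite divfK.
Qed.

Lemma jacF_swap_invariant p q : p != q -> v p = v q -> (forall l, 0 < v l) -> H != 0 ->
  [/\ jacF alpha v p p = jacF alpha v q q, jacF alpha v p q = jacF alpha v q p &
      forall i, i != p -> i != q -> jacF alpha v i p = jacF alpha v i q].
Proof.
move=> neq_pq vpq v_gt0 H_neq0.
have wpq : w p = w q by rewrite /vpow vpq.
split; first by rewrite !jacF_diag ?v_gt0 // wpq vpq.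
  by rewrite jacF_offdiag ?v_gt0 // jacF_offdiag ?v_gt0 1?(eq_sym q) // -wpq -vpq.
by move=> i neq_ip neq_iq; rewrite !jacF_offdiag ?v_gt0 // wpq vpq.
Qed.

Lemma jacF_diag_sub_offdiag p q : p != q -> v p = v q -> 0 < v p -> H != 0 ->
  v p * H = w p * (S - w p) ->
  jacF alpha v p p - jacF alpha v p q = (alpha * (S - 2 * w p) - (S - w p)) / (S - w p).
Proof.
move=> neq_pq vpq vp_gt0 H_neq0 balance.
have wp_gt0 : 0 < w p by rewrite powR_gt0.
have T_neq0 : S - w p != 0.
  apply/eqP => T0; move: (mulf_neq0 (lt0r_neq0 vp_gt0) H_neq0).
  by rewrite balance T0 mulr0 eqxx.
have vq_gt0 : 0 < v q by rewrite -vpq.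
rewrite jacF_diag // jacF_offdiag // -vpq (_ : w q = w p); last by rewrite /vpow vpq.
have -> : v p `^ (alpha - 1) = w p / v p.
  by rewrite powRB ?powRr1 ?ltW // lt0r_neq0 // implybT.
have -> : H = w p * (S - w p) / v p by rewrite -balance [v p * H]mulrC mulfK // lt0r_neq0.
by field; rewrite T_neq0 !gt_eqF.
Qed.

Lemma lin_unstable_of_min_pair p q m : p != q -> v p = v q -> (forall l, 0 < v l) ->
  (forall l, v p <= v l) -> v p < v m -> Ffun alpha v p = 0 ->
  1 < alpha -> 2 * alpha - 1 <= (alpha - 1) * N%:R ->
  lin_unstable alpha v.
Proof.
move=> neq_pq vpq v_gt0 vp_min vp_lt_vm Fp0 alpha_gt1 alphaN.
have H_neq0 := Hfun_neq0_of_Ffun_eq0 (v_gt0 p) Fp0.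
have balance := Ffun_eq0_balance H_neq0 Fp0.
have alpha_ge0 : 0 <= alpha by rewrite ltW // (lt_trans ltr01).
have wp_gt0 : 0 < w p by rewrite powR_gt0.
have NwS : N%:R * w p < S.
  apply: (card_mul_lt_sum (m := m)) => [l|]; rewrite /vpow.
  - by apply: ge0_ler_powR => //; rewrite nnegrE ltW.
  - by apply: gt0_ltr_powR => //; rewrite ?nnegrE ?ltW // (lt_trans ltr01).
have [Mpp Mpq Mi] := jacF_swap_invariant neq_pq vpq v_gt0 H_neq0.
apply: (lin_unstable_of_real_eigen (z := delta_mx p 0 - delta_mx q 0)).
- apply/eqP => /matrixP /(_ p 0); rewrite !mxE !eqxx (negbTE neq_pq) subr0.
  by move/eqP; rewrite oner_eq0.
- exact: sum_delta_sub_col.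
- exact: mulmx_delta_sub.
- rewrite jacF_diag_sub_offdiag //; apply: divr_gt0; nra.
Qed.
End Instability.

Section TwoBlockEquilibria.
Variables (R : realType) (n : nat) (alpha : R) (k : nat) (v : 'I_n.+1 -> R).
Hypotheses (v_Ek : inEk alpha k v) (k_gt0 : (0 < k)%N) (k_le_n : (k <= n)%N).

Lemma inEk_low (i : 'I_n.+1) : (i < k)%N -> v i = v ord0.
Proof. by case: v_Ek => _ _ _ low _ /low; apply. Qed.

Lemma inEk_high (i : 'I_n.+1) : (k <= i)%N -> v i = v ord_max.
Proof. by case: v_Ek => _ _ _ _ high /high; apply. Qed.

Lemma inEk_two_values i : v i = v ord0 \/ v i = v ord_max.
Proof. by case: (ltnP i k) => [/inEk_low|/inEk_high]; [left | right]. Qed.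

Lemma inEk_ord0_neq_max : v ord0 != v ord_max.
Proof.
apply/eqP => v0_max; have [[[_ [sum1 _]] _] _ v_ncenter _ _] := v_Ek.
have v_const i : v i = v ord0 by case: (inEk_two_values i) => ->.
apply: v_ncenter; apply: funext => i; rewrite v_const /Defs.center.
move: sum1; rewrite (eq_bigr (fun=> v ord0)) // sumr_const card_ord => sum1.
by rewrite -[X in X / _]sum1 -(mulr_natr (v ord0)) mulfK // pnatr_eq0.
Qed.
End TwoBlockEquilibria.

Theorem lemma4p4 (R : realType) (N : nat) (alpha : R) (k : nat)
  (v : 'I_N -> R) :
  (3 <= N)%N -> 1 < alpha ->
  (N%:R - 1) / (N%:R - 2) <= alpha ->
  (1 <= k)%N -> (k * 2 <= N)%N ->
  inEk alpha k v ->
  (1 < k)%N \/ tratio v < 1 ->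
  lin_unstable alpha v.
Proof.
case: N v => [//|n] v N_ge3 alpha_gt1 alpha_ge k_gt0 k_half v_Ek k_gt1_or_t_lt1.
have alphaN : 2 * alpha - 1 <= (alpha - 1) * n.+1%:R.
  have n1_gt0 : 0 < n.+1%:R - 2 :> R by rewrite subr_gt0 ltr_nat.
  by move: alpha_ge; rewrite ler_pdivrMr // => ?; nra.
have [[_ F0] v_gt0 _ _ _] := v_Ek.
have k_le_n : (k <= n)%N by lia.
have two_values := inEk_two_values v_Ek k_gt0 k_le_n.
case: ltgtP (inEk_ord0_neq_max v_Ek k_gt0 k_le_n) => // [lt_0_max | lt_max_0] _.
- have k_gt1 : (1 < k)%N.
    case: k_gt1_or_t_lt1 => //; rewrite /tratio /= ltr_pdivrMr // mul1r.
    by rewrite ltNge ltW.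
  have lt_1_n1 : (1 < n.+1)%N by lia.
  apply: (@lin_unstable_of_min_pair _ _ _ _ ord0 (Ordinal lt_1_n1) ord_max) => //.
  + by rewrite (inEk_low v_Ek).
  + by move=> l; case: (two_values l) => ->; [apply: lexx | apply: ltW].
- have lt_predn_n1 : (n.-1 < n.+1)%N by lia.
  apply: (@lin_unstable_of_min_pair _ _ _ _ ord_max (Ordinal lt_predn_n1) ord0) => //.
  + by apply/eqP => /(congr1 val) /=; lia.
  + by rewrite (inEk_high v_Ek) //=; lia.
  + by move=> l; case: (two_values l) => ->; [apply: ltW | apply: lexx].
Qed.
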